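(* The number of $M$-equivalence classes of vertices of $\mathcal H$ (i.e. the maximal number of pairwise $M$-distinct vertices of $\mathcal H$) is exactly $5\cdot 4^{n-1}-2^{n+2}+4$, which equals the number of admissible signatures $|S|$.
   Context: Let $n\ge 1$, $[n]=\{0,\dots,n-1\}$, and real numbers $\gamma_0<\dots<\gamma_{n-1}$. For $\mathbf v=(v_{ydz})_{y\in[n],d,z\in\{0,1\}}\in\mathbb R^{4n}$ define $(M\mathbf v)_{(i,j,d_0,d_1)}=\sum_{z:d_z=0}v_{i0z}+\sum_{z:d_z=1}v_{j1z}$ for $i,j\in[n]$, $(d_0,d_1)\in\{0,1\}^2$, and $c_{(i,j,d_0,d_1)}=\gamma_j-\gamma_i$; $\mathcal H=\{\mathbf v:M\mathbf v\le\mathbf c\}$. Vectors $\mathbf v_1,\mathbf v_2$ are $M$-equivalent if $M\mathbf v_1=M\mathbf v_2$, $M$-distinct otherwise. $\mathbf v\in\mathcal H$ is a vertex if any representation $\mathbf v=\lambda\mathbf v_1+(1-\lambda)\mathbf v_2$, $\lambda\in(0,1)$, $\mathbf v_1,\mathbf v_2\in\mathcal H$, forces $M\mathbf v_1=M\mathbf v_2=M\mathbf v$. $S=S_1\cup S_2\cup S_3\subseteq\{0,1\}^{n\times2\times2}$, where: $\mathbf B\in S_1$ iff some $t\in\{0,\dots,n-2\}$ has $B_{i00}=B_{i01}=1$ for $i\ge t$ and $B_{i00}\ne B_{i01}$ for $i<t$, $B_{i10}\ne B_{i11}$ for all $i$, and some $i,j$ have $B_{i10}=B_{j11}=1$; $\mathbf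 B\in S_2$ iff $B_{(n-1)00}=B_{(n-1)01}=B_{010}=B_{011}=1$, $B_{i00}\ne B_{i01}$ for $i<n-1$, $B_{j10}\ne B_{j11}$ for $j>0$; $\mathbf B\in S_3$ iff some $t\in\{1,\dots,n-1\}$ has $B_{i10}=B_{i11}=1$ for $i\le t$ and $B_{i10}\ne B_{i11}$ for $i>t$, $B_{i00}\ne B_{i01}$ for all $i$, and some $i,j$ have $B_{i00}=B_{j01}=1$. *)

From HB Require Import structures.
From mathcomp Require Import all_boot all_order all_algebra.
From mathcomp Require Import reals.
Set Implicit Arguments. Unset Strict Implicit. Unset Printing Implicit Defensive.
Import Order.TTheory GRing.Theory Num.Theory.
Local Open Scope ring_scope.

(* Bits {0,1} are encoded as bool: false = 0, true = 1. *)

(* A vector v in R^{4n}, indexed v y d z with y : 'I_n, d z : bool. *)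
Definition vec (R : realType) (n : nat) := 'I_n -> bool -> bool -> R.

(* (M v)_(i,j,d0,d1) = sum_{z : d_z = 0} v_{i0z} + sum_{z : d_z = 1} v_{j1z} *)
Definition Mv (R : realType) (n : nat) (v : vec R n)
    (i j : 'I_n) (d0 d1 : bool) : R :=
  (if d0 then v j true false else v i false false) +
  (if d1 then v j true true else v i false true).

Definition inH (R : realType) (n : nat) (gamma : 'I_n -> R) (v : vec R n) : Prop :=
  forall (i j : 'I_n) (d0 d1 : bool), Mv v i j d0 d1 <= gamma j - gamma i.

Definition Mequiv (R : realType) (n : nat) (v1 v2 : vec R n) : Prop :=
  forall (i j : 'I_n) (d0 d1 : bool), Mv v1 i j d0 d1 = Mv v2 i j d0 d1.

Definition is_vertex (R : realType) (n : nat) (gamma : 'I_n -> R) (v : vec R n) : Prop :=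
  inH gamma v /\
  forall (lam : R) (v1 v2 : vec R n),
    0 < lam -> lam < 1 -> inH gamma v1 -> inH gamma v2 ->
    (forall y d z, v y d z = lam * v1 y d z + (1 - lam) * v2 y d z) ->
    Mequiv v1 v /\ Mequiv v2 v.

Definition num_vertex_classes_is (R : realType) (n : nat) (gamma : 'I_n -> R)
    (N : nat) : Prop :=
  (exists vs : 'I_N -> vec R n,
      (forall k, is_vertex gamma (vs k)) /\
      (forall k l, k <> l -> ~ Mequiv (vs k) (vs l))) /\
  (forall (m : nat) (ws : 'I_m -> vec R n),
      (forall k, is_vertex gamma (ws k)) ->
      (forall k l, k <> l -> ~ Mequiv (ws k) (ws l)) ->
      (m <= N)%N).

(* Signatures B in {0,1}^{n x 2 x 2}, B (i, d, z) = B_{idz}. *)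
Definition sig_t (n : nat) := {ffun 'I_n * bool * bool -> bool}.

Definition inS1 (n : nat) (B : sig_t n) : bool :=
  [exists t : 'I_n,
     [&& (t.+1 < n)%N,
         [forall i : 'I_n,
            ((t <= i)%N ==> (B (i, false, false) && B (i, false, true))) &&
            ((i < t)%N ==> (B (i, false, false) != B (i, false, true)))],
         [forall i : 'I_n, B (i, true, false) != B (i, true, true)] &
         [exists i : 'I_n, exists j : 'I_n, B (i, true, false) && B (j, true, true)]]].

Definition inS2 (n : nat) (B : sig_t n) : bool :=
  [forall i : 'I_n,
     [&& ((i.+1 == n) ==> (B (i, false, false) && B (i, false, true))),
         ((i.+1 < n)%N ==> (B (i, false, false) != B (i, false, true))),
         ((val i == 0%N) ==> (B (i, true, false) && B (i, true, true))) &
         ((0 < i)%N ==> (B (i, true, false) != B (i, true, true)))]].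

Definition inS3 (n : nat) (B : sig_t n) : bool :=
  [exists t : 'I_n,
     [&& (0 < t)%N,
         [forall i : 'I_n,
            ((i <= t)%N ==> (B (i, true, false) && B (i, true, true))) &&
            ((t < i)%N ==> (B (i, true, false) != B (i, true, true)))],
         [forall i : 'I_n, B (i, false, false) != B (i, false, true)] &
         [exists i : 'I_n, exists j : 'I_n, B (i, false, false) && B (j, false, true)]]].

Definition S (n : nat) : {set sig_t n} :=
  [set B | [|| inS1 B, inS2 B | inS3 B]].

From HB Require Import structures.
From mathcomp Require Import all_boot all_order all_algebra.
From mathcomp Require Import reals.
From mathcomp Require Import ring lra zify.
Import Order.TTheory GRing.Theory Num.Theory.
Set Implicit Arguments. Unset Strict Implicit. Unset Printing Implicit Defensive.

(* In the coordinates x_i = v_i00 + gamma_i, w_i = - v_i01 - gamma_i,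
   z_j = v_j10 - gamma_j and y_j = gamma_j - v_j11, H is cut out by the difference
   constraints x_i <= y_j, z_j <= w_i, x_i <= w_i + gamma_0 + gamma_i and
   z_j <= y_j - gamma_j - gamma_(n-1), and M v records exactly these differences, so an
   M-class is a point up to a common translation of all 4n coordinates.  At a vertex
   the tight constraints connect all coordinates, since a set of coordinates closed
   under tight constraints can be moved by +e and -e without leaving H.  Hence the
   x_i, y_j occurring in tight constraints x_i = y_j share one value s, the w_i, z_j
   occurring in tight constraints w_i = z_j share one value s + d, every other
   coordinate lies on its diagonal constraint, and some tight diagonal constraint pins
   d = - gamma_0 - gamma_t or d = - gamma_t - gamma_(n-1).  Recording these tight
   occurrences in B_i00, B_i01, B_j10, B_j11, the class of a vertex is therefore
   determined by its signature B, and B occurs iff the pattern it prescribes is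
   consistent with such a threshold d: these are exactly the signatures of S_1 and
   S_3 (pinned at t) and of S_2 (d = - gamma_0 - gamma_(n-1)).  Finally
   |S_1| = |S_3| = (2^(n-1) - 1)(2^n - 2) and |S_2| = 4^(n-1). *)

Lemma existsb_andr (T : finType) (P : pred T) (b : bool) x :
  P x -> [exists y, P y && b] = b.
Proof.
move=> Px; case: b; last by apply/existsPn => y; rewrite andbF.
by apply/existsP; exists x; rewrite Px.
Qed.

Lemma existsb_andl (T : finType) (P : pred T) (b : bool) x :
  P x -> [exists y, b && P y] = b.
Proof.
move=> Px; case: b; last by apply/existsPn => y.
by apply/existsP; exists x.
Qed.

Lemma implyb_split (c a b : bool) :
  ((c ==> a && b) && (~~ c ==> (a != b))) = (a || b) && ((a && b) == c).
Proof. by case: a; case: b; case: c. Qed.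

Lemma neqb_split (a b : bool) : (a != b) = (a || b) && ~~ (a && b).
Proof. by case: a; case: b. Qed.

(** * Counting signatures *)

Lemma card_ffun_forall (I T : finType) (A : I -> pred T) :
  #|[set f : {ffun I -> T} | [forall i, A i (f i)]]| = \prod_i #|A i|.
Proof.
have := card_family A; rewrite foldrE big_map big_enum /= => <-.
by apply: eq_card => f; rewrite inE; apply/forallP/familyP.
Qed.

Lemma prod_if_ltn (n t a b : nat) : t <= n ->
  \prod_(i < n) (if i < t then a else b) = a ^ t * b ^ (n - t).
Proof.
move=> tn; rewrite -(big_mkord xpredT (fun i => if i < t then a else b)).
have -> : a ^ t = a ^ (t - 0) by rewrite subn0.
rewrite (big_cat_nat (leq0n t) tn) -!prod_nat_const_nat.
by congr (_ * _); apply: eq_big_nat => i /andP[ti it]; rewrite ?it // ltnNge ti.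
Qed.

Lemma card_bigcup_disjoint (I T : finType) (F : I -> {set T}) :
  (forall i j, i != j -> [disjoint F i & F j]) -> #|\bigcup_i F i| = \sum_i #|F i|.
Proof.
move=> disjF; rewrite -sum1_card partition_disjoint_bigcup //.
by apply: eq_bigr => i _; rewrite sum1_card.
Qed.

Definition dif (x : bool * bool) := x.1 != x.2.
Definition both (x : bool * bool) := x.1 && x.2.

Lemma dif_nboth x : dif x -> ~~ both x. Proof. by case: x => -[] []. Qed.
Lemma both_ndif x : both x -> ~~ dif x. Proof. by case: x => -[] []. Qed.

Lemma card_dif : #|dif| = 2.
Proof.
rewrite (eq_card (B := mem [:: (true, false); (false, true)])) ?(card_uniqP _) //.
by case=> -[] [].
Qed.

Lemma card_both : #|both| = 1.
Proof. by rewrite (eq_card (B := pred1 (true, true))) ?card1 // => -[[] []]. Qed.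

Section Counting.
Variable m : nat.
Local Notation N := m.+1.
Local Notation pairs := {ffun 'I_N -> bool * bool}.
Implicit Types (B : sig_t N) (g : pairs) (lo hi : pred (bool * bool)).

Definition half (d : bool) B : pairs := [ffun i => (B (i, d, false), B (i, d, true))].

Lemma card_halves (R : pred (sig_t N)) (P Q : pred pairs) :
  (forall B, R B = P (half false B) && Q (half true B)) ->
  #|[set B | R B]| = #|[set g | P g]| * #|[set g | Q g]|.
Proof.
move=> RE.
pose halves B := (half false B, half true B).
have halves_inj : injective halves.
  move=> B B' [e0 e1]; apply/ffunP => -[[i d] z].
  case: d; [move: e1 | move: e0] => /(congr1 (fun g : pairs => g i));
    by rewrite !ffunE => -[? ?]; case: z.
rewrite -cardsX -(card_imset _ halves_inj); apply: eq_card => -[g0 g1].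
rewrite !inE /=; apply/imsetP/andP => [[B] | [Pg Qg]].
  by rewrite inE RE => /andP[PB QB] [-> ->].
pose B : sig_t N := [ffun a =>
  let: (i, d, z) := a in (if z then snd else fst) ((if d then g1 else g0) i)].
have halfB d : half d B = if d then g1 else g0.
  by apply/ffunP => i; rewrite !ffunE; case: d; case: (_ i).
by exists B; rewrite /halves ?inE ?RE !halfB ?Pg.
Qed.

(* The conditions of S_1, S_2, S_3 on each half of B are of this form: e.g.
   B_i00 = B_i01 = 1 for i >= t and B_i00 <> B_i01 for i < t is stair t dif both. *)
Definition stair (t : nat) lo hi g :=
  [forall i : 'I_N, if (i < t)%N then lo (g i) else hi (g i)].

Lemma card_stair t lo hi : t <= N ->
  #|[set g | stair t lo hi g]| = #|lo| ^ t * #|hi| ^ (N - t).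
Proof.
move=> tN; rewrite -prod_if_ltn //.
rewrite (eq_bigr (fun i : 'I_N => #|if (i < t)%N then lo else hi|)) => [|i _];
  last by case: ifP.
rewrite -card_ffun_forall; apply: eq_card => g; rewrite !inE.
by apply: eq_forallb => i; case: ifP.
Qed.

Lemma stairs_disjoint a b lo hi g : a < b -> a < N -> (forall x, lo x -> ~~ hi x) ->
  stair a lo hi g -> stair b lo hi g -> False.
Proof.
move=> ab aN lo_hi /forallP/(_ (Ordinal aN)) + /forallP/(_ (Ordinal aN)).
by rewrite /= ltnn ab => hi_a /lo_hi; rewrite hi_a.
Qed.

Lemma card_stair_dif_both t : t <= N -> #|[set g | stair t dif both g]| = 2 ^ t.
Proof. by move=> tN; rewrite card_stair // card_dif card_both exp1n muln1. Qed.

Lemma card_stair_both_dif t : t <= N -> #|[set g | stair t both dif g]| = 2 ^ (N - t).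
Proof. by move=> tN; rewrite card_stair // card_dif card_both exp1n mul1n. Qed.

Lemma card_stairs (th : 'I_N -> nat) lo hi (c : 'I_N -> bool) :
  (forall t, c t -> th t <= N) -> (forall x, lo x -> ~~ hi x) -> injective th ->
  #|[set g | [exists t, c t && stair (th t) lo hi g]]| =
  \sum_(t | c t) #|[set g | stair (th t) lo hi g]|.
Proof.
move=> thN lo_hi th_inj.
have -> : [set g | [exists t, c t && stair (th t) lo hi g]] =
          \bigcup_t [set g | c t && stair (th t) lo hi g].
  apply/setP => g; rewrite inE; apply/idP/bigcupP => [/existsP[t ht] | [t _ ht]].
    by exists t; rewrite ?inE.
  by apply/existsP; exists t; rewrite inE in ht.
rewrite card_bigcup_disjoint => [|t t' neq_t].
  rewrite [RHS]big_mkcond; apply: eq_bigr => t _; case: (c t) => //.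
  by apply/eqP; rewrite cards_eq0; apply/eqP/setP => g; rewrite !inE.
rewrite -setI_eq0; apply/eqP/setP => g; rewrite !inE.
apply/negP => /andP[/andP[ct st] /andP[ct' st']].
have /negP := contra_neq (@th_inj t t') neq_t; case: ltngtP => // lt _.
  exact: stairs_disjoint lt (leq_trans lt (thN _ ct')) lo_hi st st'.
exact: stairs_disjoint lt (leq_trans lt (thN _ ct)) lo_hi st' st.
Qed.

Definition rising g := [exists t : 'I_N, (t < m)%N && stair t dif both g].
Definition falling g := [exists t : 'I_N, (0 < t)%N && stair t.+1 both dif g].
Definition mixed g := stair N dif both g && [exists i, exists j, (g i).1 && (g j).2].

Lemma card_rising : #|[set g | rising g]| = 2 ^ m - 1.
Proof.
rewrite (@card_stairs (@nat_of_ord N) dif both (fun t => t < m)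
  (fun t _ => ltnW (ltn_ord t)) dif_nboth (@ord_inj N)).
rewrite (eq_bigr (fun t : 'I_N => 2 ^ t)) => [|t _]; last exact/card_stair_dif_both/ltnW.
rewrite big_mkcond big_ord_recr /= ltnn addn0 subn1 predn_exp mul1n.
by apply: eq_bigr => t _; rewrite ltn_ord.
Qed.

Lemma card_falling : #|[set g | falling g]| = 2 ^ m - 1.
Proof.
rewrite (@card_stairs (fun t : 'I_N => t.+1) both dif (fun t => 0 < t)
  (fun t _ => ltn_ord t) both_ndif).
  rewrite (eq_bigr (fun t : 'I_N => 2 ^ (m - t))) => [|t _]; last first.
    by rewrite card_stair_both_dif.
  rewrite big_mkcond big_ord_recl /= subn1 predn_exp mul1n.
  rewrite (reindex_inj rev_ord_inj); apply: eq_bigr => t _ /=.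
  by rewrite /bump leq0n add1n; congr (_ ^ _); move: (ltn_ord t); lia.
by move=> t t' /succn_inj /val_inj.
Qed.

Lemma card_mixed : #|[set g | mixed g]| = 2 ^ N - 2.
Proof.
have alldif_const (x : bool * bool) : dif x -> stair N dif both [ffun=> x].
  by move=> dx; apply/forallP => i; rewrite ffunE ltn_ord.
have -> : [set g | mixed g] = [set g | stair N dif both g] :\:
                               [set [ffun=> (true, false)]; [ffun=> (false, true)]].
  apply/setP => g; rewrite !inE /mixed.
  have [sg | _] := boolP (stair N dif both g); rewrite ?andTb ?andbT ?andbF //.
  have dg i : dif (g i) by move/forallP: sg => /(_ i); rewrite ltn_ord.
  apply/existsP/norP => [[i /existsP[j /andP[gi gj]]] | [n10 n01]].
    by split; apply/negP => /eqP eg; [move: gj | move: gi]; rewrite eg ffunE.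
  have [j gj] : exists j, (g j).2.
    apply/existsP; apply: contraR n10 => /existsPn n2; apply/eqP/ffunP => k.
    by move: (dg k) (n2 k); rewrite ffunE; case: (g k) => -[] [].
  have [i gi] : exists i, (g i).1.
    apply/existsP; apply: contraR n01 => /existsPn n1; apply/eqP/ffunP => k.
    by move: (dg k) (n1 k); rewrite ffunE; case: (g k) => -[] [].
  by exists i; apply/existsP; exists j; rewrite gi gj.
rewrite cardsD card_stair_dif_both // (setIidPr _); last first.
  by apply/subsetP => g; rewrite !inE => /orP[] /eqP ->; apply: alldif_const.
rewrite cards2.
suff /negPf -> : [ffun=> (true, false)] != [ffun=> (false, true)] :> pairs by [].
by apply/eqP => /ffunP/(_ ord0); rewrite !ffunE.
Qed.

Lemma stair_half t d B (lo hi : pred (bool * bool)) :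
  stair t lo hi (half d B) =
  [forall i : 'I_N, if (i < t)%N then lo (B (i, d, false), B (i, d, true))
                    else hi (B (i, d, false), B (i, d, true))].
Proof. by apply: eq_forallb => i; rewrite ffunE. Qed.

Lemma split_half d B : [exists i, exists j, (half d B i).1 && (half d B j).2] =
  [exists i : 'I_N, exists j : 'I_N, B (i, d, false) && B (j, d, true)].
Proof. by apply: eq_existsb => i; apply: eq_existsb => j; rewrite !ffunE. Qed.

Lemma inS1E B : inS1 B = rising (half false B) && mixed (half true B).
Proof.
rewrite /inS1 /rising /mixed stair_half split_half.
have -> : [forall i : 'I_N,
             if (i < N)%N then dif (B (i, true, false), B (i, true, true))
             else both (B (i, true, false), B (i, true, true))] =
          [forall i : 'I_N, B (i, true, false) != B (i, true, true)].
  by apply: eq_forallb => i; rewrite ltn_ord.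
have E t : stair t dif both (half false B) =
  [forall i : 'I_N, ((t <= i)%N ==> B (i, false, false) && B (i, false, true)) &&
                    ((i < t)%N ==> (B (i, false, false) != B (i, false, true)))].
  rewrite stair_half; apply: eq_forallb => i.
  by rewrite ltnNge; case: (t <= i)%N; rewrite ?andbT.
apply/idP/idP => [/existsP[t /and4P[tm s0 -> ->]] |
                  /andP[/existsP[t /andP[tm s0]] /andP[s1 s2]]].
  by rewrite !andbT; apply/existsP; exists t; rewrite -ltnS tm E.
by apply/existsP; exists t; rewrite ltnS tm -E s0 s1 s2.
Qed.

Lemma inS2E B :
  inS2 B = stair m dif both (half false B) && stair 1 both dif (half true B).
Proof.
rewrite /inS2 !stair_half.
have E (i : 'I_N) : [&& (i.+1 == N) ==> B (i, false, false) && B (i, false, true),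
              (i.+1 < N)%N ==> (B (i, false, false) != B (i, false, true)),
              (val i == 0%N) ==> B (i, true, false) && B (i, true, true)
            & (0 < i)%N ==> (B (i, true, false) != B (i, true, true))] =
  (if (i < m)%N then dif (B (i, false, false), B (i, false, true))
   else both (B (i, false, false), B (i, false, true))) &&
  (if (i < 1)%N then both (B (i, true, false), B (i, true, true))
   else dif (B (i, true, false), B (i, true, true))).
  rewrite eqSS ltnS ltnS leqn0 lt0n /dif /both /=.
  move: (ltn_ord i); rewrite ltnS.
  by case: ltngtP => // _ _; case: (_ == 0%N); do 4 case: (B _).
apply/idP/idP => [/forallP h | /andP[/forallP h0 /forallP h1]].
  by apply/andP; split; apply/forallP => i; move: (h i); rewrite E => /andP[].
by apply/forallP => i; rewrite E h0 h1.
Qed.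

Lemma inS3E B : inS3 B = mixed (half false B) && falling (half true B).
Proof.
rewrite /inS3 /falling /mixed stair_half split_half.
have -> : [forall i : 'I_N,
             if (i < N)%N then dif (B (i, false, false), B (i, false, true))
             else both (B (i, false, false), B (i, false, true))] =
          [forall i : 'I_N, B (i, false, false) != B (i, false, true)].
  by apply: eq_forallb => i; rewrite ltn_ord.
have E t : stair t.+1 both dif (half true B) =
  [forall i : 'I_N, ((i <= t)%N ==> B (i, true, false) && B (i, true, true)) &&
                    ((t < i)%N ==> (B (i, true, false) != B (i, true, true)))].
  rewrite stair_half; apply: eq_forallb => i.
  by rewrite ltnS ltnNge; case: (i <= t)%N; rewrite ?andbT.
apply/idP/idP => [/existsP[t /and4P[t0 s1 -> ->]] |
                  /andP[/andP[s0 s2] /existsP[t /andP[t0 s1]]]].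
  by rewrite /=; apply/existsP; exists t; rewrite t0 E.
by apply/existsP; exists t; rewrite t0 -E s1 s0 s2.
Qed.

Lemma stair_all_dif g : stair N dif both g = stair 0 both dif g.
Proof. by apply: eq_forallb => i; rewrite ltn_ord. Qed.

Lemma card_S : #|S N| = 5 * 4 ^ (N - 1) + 4 - 2 ^ (N + 2).
Proof.
have disj (P Q : pred (sig_t N)) : (forall B, P B -> Q B -> False) ->
    #|[set B | P B] :|: [set B | Q B]| = #|[set B | P B]| + #|[set B | Q B]|.
  move=> PQ; rewrite cardsU (_ : _ :&: _ = set0) ?cards0 ?subn0 //.
  by apply/setP => B; rewrite !inE; apply/negP => /andP[/PQ].
have -> : S N = [set B | inS1 B || inS2 B] :|: [set B | inS3 B].
  by apply/setP => B; rewrite !inE orbA.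
rewrite disj => [|B]; last first.
  rewrite inS1E inS2E inS3E => S12 /andP[/andP[s' _] f].
  case/orP: S12 => [/andP[_ /andP[s _]] | /andP[s _]].
    case/existsP: f => t /andP[_ st]; rewrite stair_all_dif in s.
    exact: stairs_disjoint (ltn0Sn t) (ltn0Sn m) both_ndif s st.
  exact: stairs_disjoint (ltnSn m) (ltnSn m) dif_nboth s s'.
have -> : [set B : sig_t N | inS1 B || inS2 B] = [set B | inS1 B] :|: [set B | inS2 B].
  by apply/setP => B; rewrite !inE.
rewrite disj => [|B]; last first.
  rewrite inS1E inS2E => /andP[_ /andP[s _]] /andP[_ s'].
  rewrite stair_all_dif in s.
  exact: stairs_disjoint (ltn0Sn 0) (ltn0Sn m) both_ndif s s'.
rewrite (card_halves inS1E) (card_halves inS2E) (card_halves inS3E).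
rewrite card_rising card_mixed card_falling card_stair_dif_both // card_stair_both_dif //.
have -> : N - 1 = m by rewrite subn1.
rewrite -[4]/(2 * 2) expnMn addn2 !expnS.
by have := expn_gt0 2 m; set x := 2 ^ m; nia.
Qed.

End Counting.

(** * Coordinates of H *)

Local Open Scope ring_scope.

Lemma finite_pos_lbound (R : realDomainType) (T : finType) (f : T -> R) :
  exists2 e, 0 < e & forall x, 0 < f x -> e <= f x.
Proof.
exists (\big[Num.min/1]_(x | 0 < f x) f x).
  by apply: (big_ind (fun y => 0 < y)) => // a b; rewrite lt_min => -> ->.
by move=> x fx; rewrite (bigD1 x) //= ge_min lexx.
Qed.

Section VertexClasses.
Variables (R : realType) (m : nat) (gamma : 'I_m.+1 -> R).
Hypothesis gamma_incr : forall i j : 'I_m.+1, (i < j)%N -> gamma i < gamma j.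
Local Notation N := m.+1.
Implicit Types (v w : vec R N) (i j k : 'I_N) (B : sig_t N).
Implicit Types (K : 'I_N -> bool -> bool -> bool).

Lemma lt_gamma i j : (gamma i < gamma j) = (i < j)%N.
Proof.
case: ltngtP => [/gamma_incr -> // | /gamma_incr/lt_gtF -> // | /ord_inj ->].
by rewrite ltxx.
Qed.

Lemma le_gamma i j : (gamma i <= gamma j) = (i <= j)%N.
Proof. by rewrite [LHS]leNgt lt_gamma -leqNgt. Qed.

Lemma gamma0_le i : gamma ord0 <= gamma i.
Proof. by rewrite le_gamma. Qed.

Lemma le_gamma_max i : gamma i <= gamma ord_max.
Proof. by rewrite le_gamma -ltnS. Qed.

Definition alpha i := gamma ord0 + gamma i.
Definition beta j := - gamma j - gamma ord_max.

Lemma le_neg_alpha i k : (- alpha i <= - alpha k) = (k <= i)%N.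
Proof. by rewrite /alpha lerN2 lerD2l le_gamma. Qed.

Lemma le_beta j k : (beta k <= beta j) = (j <= k)%N.
Proof. by rewrite /beta lerD2r lerN2 le_gamma. Qed.

Lemma gamma0_lt j : j != ord0 -> gamma ord0 < gamma j.
Proof. by rewrite lt_gamma lt0n. Qed.

Lemma lt_gamma_max i : i != ord_max -> gamma i < gamma ord_max.
Proof. by move=> ni; rewrite lt_gamma ltn_neqAle -ltnS ltn_ord andbT. Qed.

Lemma neg_alpha_le_beta i j :
  (- alpha i <= beta j) = (i == ord_max) && (j == ord0).
Proof.
rewrite /alpha /beta.
have := le_gamma_max i; have := gamma0_le j.
case: (eqVneq i ord_max) => [-> | /lt_gamma_max ?] _;
  case: (eqVneq j ord0) => [-> | /gamma0_lt ?] _ /=.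
- by apply/idP; lra.
all: by apply/negbTE; rewrite -ltNge; lra.
Qed.

Lemma beta0E : beta ord0 = - alpha ord_max.
Proof. by rewrite /alpha /beta; ring. Qed.

Definition cX v i := v i false false + gamma i.
Definition cW v i := - v i false true - gamma i.
Definition cZ v j := v j true false - gamma j.
Definition cY v j := gamma j - v j true true.

Lemma Mv01E v i j : Mv v i j false true = cX v i - cY v j + (gamma j - gamma i).
Proof. by rewrite /Mv /cX /cY; ring. Qed.

Lemma Mv10E v i j : Mv v i j true false = cZ v j - cW v i + (gamma j - gamma i).
Proof. by rewrite /Mv /cZ /cW; ring. Qed.

Lemma Mv00E v i j : Mv v i j false false = cX v i - cW v i - 2 * gamma i.
Proof. by rewrite /Mv /cX /cW; ring. Qed.

Lemma Mv11E v i j : Mv v i j true true = cZ v j - cY v j + 2 * gamma j.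
Proof. by rewrite /Mv /cZ /cY; ring. Qed.

Section Membership.
Variable v : vec R N.
Hypothesis vH : inH gamma v.

Lemma inH_XY i j : cX v i <= cY v j.
Proof. by move: (vH i j false true); rewrite Mv01E; lra. Qed.

Lemma inH_ZW i j : cZ v j <= cW v i.
Proof. by move: (vH i j true false); rewrite Mv10E; lra. Qed.

Lemma inH_XW i : cX v i <= cW v i + alpha i.
Proof. by move: (vH i ord0 false false); rewrite Mv00E /alpha; lra. Qed.

Lemma inH_ZY j : cZ v j <= cY v j + beta j.
Proof. by move: (vH ord_max j true true); rewrite Mv11E /beta; lra. Qed.

End Membership.

Lemma inH_intro v :
  (forall i j, cX v i <= cY v j) -> (forall i j, cZ v j <= cW v i) ->
  (forall i, cX v i <= cW v i + alpha i) -> (forall j, cZ v j <= cY v j + beta j) ->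
  inH gamma v.
Proof.
move=> hXY hZW hXW hZY i j [] [].
- by move: (hZY j) (le_gamma_max i); rewrite Mv11E /beta; lra.
- by move: (hZW i j); rewrite Mv10E; lra.
- by move: (hXY i j); rewrite Mv01E; lra.
- by move: (hXW i) (gamma0_le j); rewrite Mv00E /alpha; lra.
Qed.

Lemma inH_Mequiv v w : Mequiv v w -> inH gamma v -> inH gamma w.
Proof. by move=> E vH i j d0 d1; rewrite -E. Qed.

Lemma Mequiv_coords v w (e : R) :
  (forall i, cX v i = cX w i + e) -> (forall i, cW v i = cW w i + e) ->
  (forall j, cZ v j = cZ w j + e) -> (forall j, cY v j = cY w j + e) ->
  Mequiv v w.
Proof.
move=> hX hW hZ hY i j [] []; rewrite ?Mv00E ?Mv01E ?Mv10E ?Mv11E ?hX ?hW ?hZ ?hY; ring.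
Qed.

Definition tight v i j d0 d1 := Mv v i j d0 d1 = gamma j - gamma i.

Lemma tight01E v i j : tight v i j false true <-> cX v i = cY v j.
Proof. by rewrite /tight Mv01E; split; lra. Qed.

Lemma tight10E v i j : tight v i j true false <-> cW v i = cZ v j.
Proof. by rewrite /tight Mv10E; split; lra. Qed.

Lemma tight00E v i : tight v i ord0 false false <-> cX v i = cW v i + alpha i.
Proof. by rewrite /tight Mv00E /alpha; split; lra. Qed.

Lemma tight11E v j : tight v ord_max j true true <-> cZ v j = cY v j + beta j.
Proof. by rewrite /tight Mv11E /beta; split; lra. Qed.

(* Row (i, j, 0, 0) is row (i, 0, 0, 0) weakened by gamma_j - gamma_0 >= 0. *)
Lemma tight00 v i j : inH gamma v -> tight v i j false false ->
  cX v i = cW v i + alpha i.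
Proof.
by move=> vH; move: (inH_XW vH i) (gamma0_le j); rewrite /tight Mv00E /alpha; lra.
Qed.

Lemma tight11 v i j : inH gamma v -> tight v i j true true ->
  cZ v j = cY v j + beta j.
Proof.
by move=> vH; move: (inH_ZY vH j) (le_gamma_max i); rewrite /tight Mv11E /beta; lra.
Qed.

(* Mv v i j d0 d1 = entry v i j d0 false + entry v i j d1 true. *)
Definition entry T (f : 'I_N -> bool -> bool -> T) i j (d z : bool) :=
  if d then f j true z else f i false z.

Definition perturb K (e : R) : vec R N :=
  fun y d z => if K y d z then (if z then - e else e) else 0.

Lemma Mv_add v w i j d0 d1 :
  Mv (fun y d z => v y d z + w y d z) i j d0 d1 = Mv v i j d0 d1 + Mv w i j d0 d1.
Proof. by rewrite /Mv; case: d0; case: d1; rewrite addrACA. Qed.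

Lemma Mv_perturb K (e : R) i j d0 d1 : Mv (perturb K e) i j d0 d1 =
  ((entry K i j d0 false)%:R - (entry K i j d1 true)%:R) * e.
Proof.
rewrite /Mv /perturb /entry.
by case: d0; case: d1; do 2 case: (K _ _ _); rewrite /=; ring.
Qed.

(* Moving the coordinates selected by K by +e (z = 0) and -e (z = 1) changes each
   row by e times the jump of K across it; rows without a jump keep their value. *)
Lemma vertex_cut v K : is_vertex gamma v ->
  (forall i j d0 d1, tight v i j d0 d1 -> entry K i j d0 false = entry K i j d1 true) ->
  forall i j d0 d1, entry K i j d0 false = entry K i j d1 true.
Proof.
case=> vH vV hK.
have [e e_gt0 e_le] := finite_pos_lbound (fun r : 'I_N * 'I_N * bool * bool =>
  let: (i, j, d0, d1) := r in gamma j - gamma i - Mv v i j d0 d1).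
pose vpert e' y d z := v y d z + perturb K e' y d z.
have vpert_inH e' : e' = e \/ e' = - e -> inH gamma (vpert e').
  move=> he' i j d0 d1; rewrite Mv_add Mv_perturb; move: (vH i j d0 d1).
  have [-> | neqK] := eqVneq (entry K i j d0 false) (entry K i j d1 true).
    by rewrite subrr mul0r addr0.
  have : e <= gamma j - gamma i - Mv v i j d0 d1.
    apply: (e_le (i, j, d0, d1)); rewrite /= subr_gt0 lt_neqAle vH andbT.
    exact: contra_neq (hK i j d0 d1) neqK.
  by move: neqK; do 2 case: (entry _ _ _ _ _) => //=; case: he' => ->; lra.
have half_gt0 : 0 < 2^-1 :> R by rewrite invr_gt0.
have half_lt1 : 2^-1 < 1 :> R by rewrite invf_lt1 ?ltr1n.
have mid y d z : v y d z = 2^-1 * vpert e y d z + (1 - 2^-1) * vpert (- e) y d z.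
  by rewrite /vpert /perturb; case: ifP => _; [case: z|]; field.
have [E _] := vV _ _ _ half_gt0 half_lt1
  (vpert_inH e (or_introl erefl)) (vpert_inH (- e) (or_intror erefl)) mid.
move=> i j d0 d1; move: (E i j d0 d1); rewrite Mv_add Mv_perturb.
by do 2 case: (entry _ _ _ _ _) => //=; lra.
Qed.

Lemma tight_closed_const v K : is_vertex gamma v ->
  (forall i j, cX v i = cY v j -> K i false false = K j true true) ->
  (forall i j, cW v i = cZ v j -> K i false true = K j true false) ->
  (forall i, cX v i = cW v i + alpha i -> K i false false = K i false true) ->
  (forall j, cZ v j = cY v j + beta j -> K j true false = K j true true) ->
  forall y d z y' d' z', K y d z = K y' d' z'.
Proof.
move=> vV hXY hWZ hXW hZY.
have rowK := vertex_cut vV (K := K) _.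
have {}rowK : forall i j d0 d1, entry K i j d0 false = entry K i j d1 true.
  apply: rowK => i j [] [] t.
  - exact/hZY/(tight11 vV.1 t).
  - by apply/esym/hWZ/tight10E.
  - exact/hXY/tight01E.
  - exact/hXW/(tight00 vV.1 t).
have K_XY i j : K i false false = K j true true := rowK i j false true.
have K_ZW i j : K j true false = K i false true := rowK i j true false.
have K_XW i : K i false false = K i false true := rowK i i false false.
suff K0 y d z : K y d z = K ord0 false false by move=> y d z y' d' z'; rewrite !K0.
case: d; case: z.
- by rewrite -(K_XY ord0 y).
- by rewrite (K_ZW ord0 y) -K_XW.
- by rewrite -K_XW (K_XY y ord0) -(K_XY ord0 ord0).
- by rewrite (K_XY y ord0) -(K_XY ord0 ord0).
Qed.

(** * Signatures of vertices *)

Definition b00 B i := B (i, false, false).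
Definition b01 B i := B (i, false, true).
Definition b10 B j := B (j, true, false).
Definition b11 B j := B (j, true, true).
Definition both0 B i := b00 B i && b01 B i.
Definition both1 B j := b10 B j && b11 B j.

Definition covering B :=
  (forall i, b00 B i || b01 B i) /\ (forall j, b10 B j || b11 B j).
Definition nonempty B :=
  [/\ exists i, b00 B i, exists j, b11 B j, exists i, b01 B i & exists j, b10 B j].

Definition signature v : sig_t N := [ffun a : 'I_N * bool * bool =>
  let: (y, d, z) := a in
  if d then (if z then [exists i, cX v i == cY v y] else [exists i, cW v i == cZ v y])
  else (if z then [exists j, cW v y == cZ v j] else [exists j, cX v y == cY v j])].

Lemma b00_sigP v i : reflect (exists j, cX v i = cY v j) (b00 (signature v) i).
Proof. by rewrite /b00 ffunE; apply: (iffP existsP) => -[j /eqP ?]; exists j. Qed.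

Lemma b11_sigP v j : reflect (exists i, cX v i = cY v j) (b11 (signature v) j).
Proof. by rewrite /b11 ffunE; apply: (iffP existsP) => -[i /eqP ?]; exists i. Qed.

Lemma b01_sigP v i : reflect (exists j, cW v i = cZ v j) (b01 (signature v) i).
Proof. by rewrite /b01 ffunE; apply: (iffP existsP) => -[j /eqP ?]; exists j. Qed.

Lemma b10_sigP v j : reflect (exists i, cW v i = cZ v j) (b10 (signature v) j).
Proof. by rewrite /b10 ffunE; apply: (iffP existsP) => -[i /eqP ?]; exists i. Qed.

Lemma signature_Mequiv v w : Mequiv v w -> signature v = signature w.
Proof.
move=> E.
have eXY i j : (cX v i == cY v j) = (cX w i == cY w j).
  by apply/eqP/eqP => h; move: (E i j false true); rewrite !Mv01E; lra.
have eWZ i j : (cW v i == cZ v j) = (cW w i == cZ w j).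
  by apply/eqP/eqP => h; move: (E i j true false); rewrite !Mv10E; lra.
by apply/ffunP => -[[y [] ] []]; rewrite !ffunE; apply: eq_existsb => k.
Qed.

Section SignatureInH.
Variable v : vec R N.
Hypothesis vH : inH gamma v.

Lemma sig_XY i j : b00 (signature v) i -> b11 (signature v) j -> cX v i = cY v j.
Proof.
move=> /b00_sigP [j' e1] /b11_sigP [i' e2].
by move: (inH_XY vH i j) (inH_XY vH i' j'); lra.
Qed.

Lemma sig_WZ i j : b01 (signature v) i -> b10 (signature v) j -> cW v i = cZ v j.
Proof.
move=> /b01_sigP [j' e1] /b10_sigP [i' e2].
by move: (inH_ZW vH i j) (inH_ZW vH i' j'); lra.
Qed.

Lemma sig_lt_XY i j :
  ~~ b00 (signature v) i || ~~ b11 (signature v) j -> cX v i < cY v j.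
Proof.
rewrite lt_neqAle inH_XY // andbT => /orP[] /negP nb; apply/eqP => e; apply: nb.
  by apply/b00_sigP; exists j.
by apply/b11_sigP; exists i.
Qed.

Lemma sig_lt_ZW i j :
  ~~ b01 (signature v) i || ~~ b10 (signature v) j -> cZ v j < cW v i.
Proof.
rewrite lt_neqAle inH_ZW // andbT => /orP[] /negP nb; apply/eqP => e; apply: nb.
  by apply/b01_sigP; exists j.
by apply/b10_sigP; exists i.
Qed.

End SignatureInH.

Section VertexSignature.
Variable v : vec R N.
Hypothesis vV : is_vertex gamma v.
Local Notation B := (signature v).

Lemma vertex_cover0 i : b00 B i || b01 B i.
Proof.
apply: contraT => /norP[/b00_sigP nX /b01_sigP nW].
pose K y (d z : bool) := (y == i) && ~~ d.
suff: K i false false = K i true false by rewrite /K eqxx.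
apply: (tight_closed_const vV) => [i' j' e | i' j' e | i' e | j' e];
    rewrite /K /= ?andbT ?andbF //.
  by apply: contra_notF nX => /eqP <-; exists j'.
by apply: contra_notF nW => /eqP <-; exists j'.
Qed.

Lemma vertex_cover1 j : b10 B j || b11 B j.
Proof.
apply: contraT => /norP[/b10_sigP nZ /b11_sigP nY].
pose K y (d z : bool) := (y == j) && d.
suff: K j true false = K j false false by rewrite /K eqxx.
apply: (tight_closed_const vV) => [i' j' e | i' j' e | i' e | j' e];
    rewrite /K /= ?andbT ?andbF //.
  by apply/esym; apply: contra_notF nY => /eqP <-; exists i'.
by apply/esym; apply: contra_notF nZ => /eqP <-; exists i'.
Qed.

Lemma vertex_diag0 i : ~~ both0 B i -> cX v i = cW v i + alpha i.
Proof.
move=> nb; apply/eqP; apply: contraT => nT.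
case/nandP: nb => [/b00_sigP nX | /b01_sigP nW].
- pose K y (d z : bool) := (y == i) && ~~ d && ~~ z.
  suff: K i false false = K i false true by rewrite /K eqxx.
  apply: (tight_closed_const vV) => [i' j' e | i' j' e | i' e | j' e];
    rewrite /K /= ?andbT ?andbF //.
    by apply: contra_notF nX => /eqP <-; exists j'.
  by apply: contraNF nT => /eqP <-; apply/eqP.
- pose K y (d z : bool) := (y == i) && ~~ d && z.
  suff: K i false true = K i false false by rewrite /K eqxx.
  apply: (tight_closed_const vV) => [i' j' e | i' j' e | i' e | j' e];
    rewrite /K /= ?andbT ?andbF //.
    by apply: contra_notF nW => /eqP <-; exists j'.
  by apply/esym; apply: contraNF nT => /eqP <-; apply/eqP.
Qed.

Lemma vertex_diag1 j : ~~ both1 B j -> cZ v j = cY v j + beta j.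
Proof.
move=> nb; apply/eqP; apply: contraT => nT.
case/nandP: nb => [/b10_sigP nZ | /b11_sigP nY].
- pose K y (d z : bool) := (y == j) && d && ~~ z.
  suff: K j true false = K j true true by rewrite /K eqxx.
  apply: (tight_closed_const vV) => [i' j' e | i' j' e | i' e | j' e];
    rewrite /K /= ?andbT ?andbF //.
    by apply/esym; apply: contra_notF nZ => /eqP <-; exists i'.
  by apply: contraNF nT => /eqP <-; apply/eqP.
- pose K y (d z : bool) := (y == j) && d && z.
  suff: K j true true = K j true false by rewrite /K eqxx.
  apply: (tight_closed_const vV) => [i' j' e | i' j' e | i' e | j' e];
    rewrite /K /= ?andbT ?andbF //.
    by apply/esym; apply: contra_notF nY => /eqP <-; exists i'.
  by apply/esym; apply: contraNF nT => /eqP <-; apply/eqP.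
Qed.

(* Without any tight pair x_i = y_j, the remaining tight constraints would chain
   x_(n-1) = w_(n-1) + alpha = z_0 + alpha = y_0 + beta + alpha = y_0. *)
Lemma vertex_exists_b00 : exists i, b00 B i.
Proof.
apply/existsP; apply: contraT => /existsPn nX.
have nY j : ~~ b11 B j.
  by apply/negP => /b11_sigP [i e]; case/negP: (nX i); apply/b00_sigP; exists j.
have bW i : b01 B i by move: (vertex_cover0 i); rewrite (negbTE (nX i)).
have bZ j : b10 B j by move: (vertex_cover1 j); rewrite (negbTE (nY j)) orbF.
have dX := vertex_diag0 (i := ord_max); rewrite /both0 (negbTE (nX _)) in dX.
have dZ := vertex_diag1 (j := ord0); rewrite /both1 (negbTE (nY _)) andbF in dZ.
have eWZ := sig_WZ vV.1 (bW ord_max) (bZ ord0).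
case/negP: (nX ord_max); apply/b00_sigP; exists ord0.
by move: (dX isT) (dZ isT) eWZ; rewrite beta0E; lra.
Qed.

Lemma vertex_exists_b01 : exists i, b01 B i.
Proof.
apply/existsP; apply: contraT => /existsPn nW.
have nZ j : ~~ b10 B j.
  by apply/negP => /b10_sigP [i e]; case/negP: (nW i); apply/b01_sigP; exists j.
have bX i : b00 B i by move: (vertex_cover0 i); rewrite (negbTE (nW i)) orbF.
have bY j : b11 B j by move: (vertex_cover1 j); rewrite (negbTE (nZ j)).
have dX := vertex_diag0 (i := ord_max); rewrite /both0 (negbTE (nW _)) andbF in dX.
have dZ := vertex_diag1 (j := ord0); rewrite /both1 (negbTE (nZ _)) in dZ.
have eXY := sig_XY vV.1 (bX ord_max) (bY ord0).
case/negP: (nW ord_max); apply/b01_sigP; exists ord0.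
by move: (dX isT) (dZ isT) eXY; rewrite beta0E; lra.
Qed.

Lemma vertex_nonempty : nonempty B.
Proof.
have [i /b00_sigP [j eXY]] := vertex_exists_b00.
have [i' /b01_sigP [j' eWZ]] := vertex_exists_b01.
split; [exists i | exists j | exists i' | exists j'].
- by apply/b00_sigP; exists j.
- by apply/b11_sigP; exists i.
- by apply/b01_sigP; exists j'.
- by apply/b10_sigP; exists i'.
Qed.

(* Otherwise the coordinates x_i, y_j tight in x <= y, together with the w_i, z_j
   that are tight only against them through a diagonal constraint, would form a
   closed set containing x_i but not w_i' for any i' with B_(i'01) = 1. *)
Lemma vertex_pinned :
  (exists i, both0 B i /\ cX v i = cW v i + alpha i) \/
  (exists j, both1 B j /\ cZ v j = cY v j + beta j).
Proof.
case: (boolP [exists i, both0 B i && (cX v i == cW v i + alpha i)]).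
  by case/existsP => i /andP[bi /eqP e]; left; exists i.
move=> /existsPn nI.
case: (boolP [exists j, both1 B j && (cZ v j == cY v j + beta j)]).
  by case/existsP => j /andP[bj /eqP e]; right; exists j.
move=> /existsPn nJ; exfalso.
pose K y (d z : bool) :=
  if d then b11 B y && (z || ~~ b10 B y) else b00 B y && (~~ z || ~~ b01 B y).
have [[i1 bX1] _ [i2 bW2] _] := vertex_nonempty.
suff: K i1 false false = K i2 false true by rewrite /K /= bX1 bW2 andbF.
apply: (tight_closed_const vV) => [i j e | i j e | i e | j e]; rewrite /K /= ?andbT.
- have -> : b00 B i by apply/b00_sigP; exists j.
  by apply/esym/b11_sigP; exists i.
- have -> : b01 B i by apply/b01_sigP; exists j.
  have -> : b10 B j by apply/b10_sigP; exists i.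
  by rewrite !andbF.
- by move: (nI i); rewrite e eqxx andbT /both0; case: (b00 B i); case: (b01 B i).
- by move: (nJ j); rewrite e eqxx andbT /both1; case: (b10 B j); case: (b11 B j).
Qed.

End VertexSignature.

(** * Canonical representatives *)

Definition vec_of_coords (x w z y : 'I_N -> R) : vec R N := fun k d e =>
  if d then (if e then gamma k - y k else z k + gamma k)
  else (if e then - w k - gamma k else x k - gamma k).

Definition rep B (d : R) := vec_of_coords
  (fun i => if b00 B i then 0 else d + alpha i)
  (fun i => if b01 B i then d else - alpha i)
  (fun j => if b10 B j then d else beta j)
  (fun j => if b11 B j then 0 else d - beta j).

Lemma cX_rep B d i : cX (rep B d) i = if b00 B i then 0 else d + alpha i.
Proof. by rewrite /cX /rep /vec_of_coords /=; ring. Qed.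

Lemma cW_rep B d i : cW (rep B d) i = if b01 B i then d else - alpha i.
Proof. by rewrite /cW /rep /vec_of_coords /=; ring. Qed.

Lemma cZ_rep B d j : cZ (rep B d) j = if b10 B j then d else beta j.
Proof. by rewrite /cZ /rep /vec_of_coords /=; ring. Qed.

Lemma cY_rep B d j : cY (rep B d) j = if b11 B j then 0 else d - beta j.
Proof. by rewrite /cY /rep /vec_of_coords /=; ring. Qed.

(* The common value of the x_i, y_j tight in x <= y is the translation parameter;
   the tight diagonal constraint at the pinning index then fixes the common value
   of the w_i, z_j tight in z <= w at distance d from it. *)
Lemma Mequiv_rep v B d : covering B -> nonempty B ->
  (forall i j, b00 B i -> b11 B j -> cX v i = cY v j) ->
  (forall i j, b01 B i -> b10 B j -> cW v i = cZ v j) ->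
  (forall i, ~~ both0 B i -> cX v i = cW v i + alpha i) ->
  (forall j, ~~ both1 B j -> cZ v j = cY v j + beta j) ->
  (exists i, [/\ both0 B i, cX v i = cW v i + alpha i & d = - alpha i]) \/
  (exists j, [/\ both1 B j, cZ v j = cY v j + beta j & d = beta j]) ->
  Mequiv v (rep B d).
Proof.
move=> [cov0 cov1] [[i0 bX0] [j0 bY0] [i2 bW2] [j2 bZ2]] hXY hWZ hXW hZY pin.
pose s := cX v i0.
have eX i : b00 B i -> cX v i = s by move=> bX; rewrite (hXY i j0) // -(hXY i0 j0).
have eY j : b11 B j -> cY v j = s by move=> bY; rewrite -(hXY i0 j).
have [eW eZ] : (forall i, b01 B i -> cW v i = s + d) /\
               (forall j, b10 B j -> cZ v j = s + d).
  case: pin => -[k [/andP[bk bk'] tk ->]].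
  - have eZ j : b10 B j -> cZ v j = s + - alpha k.
      by move=> bZ; rewrite -(hWZ k j) //; move: tk; rewrite eX //; lra.
    by split=> // i bW; rewrite (hWZ i j2) ?eZ.
  - have eW i : b01 B i -> cW v i = s + beta k.
      by move=> bW; rewrite (hWZ i k) // tk eY.
    by split=> // j bZ; rewrite -(hWZ i2 j) ?eW.
apply: (Mequiv_coords (e := s)) => k.
- rewrite cX_rep; case: ifP => bX; first by rewrite eX ?add0r.
  have bW : b01 B k by move: (cov0 k); rewrite bX.
  by move: (hXW k) (eW k bW); rewrite /both0 bX => /(_ isT); lra.
- rewrite cW_rep; case: ifP => bW; first by rewrite eW // addrC.
  have bX : b00 B k by move: (cov0 k); rewrite bW orbF.
  by move: (hXW k) (eX k bX); rewrite /both0 bW andbF => /(_ isT); lra.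
- rewrite cZ_rep; case: ifP => bZ; first by rewrite eZ // addrC.
  have bY : b11 B k by move: (cov1 k); rewrite bZ.
  by move: (hZY k) (eY k bY); rewrite /both1 bZ => /(_ isT); lra.
- rewrite cY_rep; case: ifP => bY; first by rewrite eY ?add0r.
  have bZ : b10 B k by move: (cov1 k); rewrite bY orbF.
  by move: (hZY k) (eZ k bZ); rewrite /both1 bY andbF => /(_ isT); lra.
Qed.

Definition threshold (d : R) := (exists i, d = - alpha i) \/ (exists j, d = beta j).

Definition admissible B d := [/\ covering B, nonempty B, threshold d,
  forall i, both0 B i = (- alpha i <= d) & forall j, both1 B j = (d <= beta j)].

Lemma beta_le_neg_alpha i j : beta j <= - alpha i.
Proof. by rewrite /alpha /beta; move: (gamma0_le j) (le_gamma_max i); lra. Qed.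

Lemma tight_segment v v1 v2 (lam : R) i j d0 d1 :
  inH gamma v1 -> inH gamma v2 -> 0 < lam -> lam < 1 ->
  (forall y d z, v y d z = lam * v1 y d z + (1 - lam) * v2 y d z) ->
  tight v i j d0 d1 -> tight v1 i j d0 d1 /\ tight v2 i j d0 d1.
Proof.
rewrite /tight => H1 H2 lam0 lam1 E.
have -> : Mv v i j d0 d1 = lam * Mv v1 i j d0 d1 + (1 - lam) * Mv v2 i j d0 d1.
  by rewrite /Mv !E; case: d0; case: d1; ring.
by move: (H1 i j d0 d1) (H2 i j d0 d1); nra.
Qed.

Section Representative.
Variables (B : sig_t N) (d : R).
Hypothesis adm : admissible B d.

Lemma lt_neg_alpha i : ~~ both0 B i -> d < - alpha i.
Proof. by case: adm => _ _ _ hb0 _; rewrite hb0 -ltNge. Qed.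

Lemma beta_lt j : ~~ both1 B j -> beta j < d.
Proof. by case: adm => _ _ _ _ hb1; rewrite hb1 -ltNge. Qed.

Lemma cX_rep_leif i : cX (rep B d) i <= 0 ?= iff b00 B i.
Proof.
apply/leifP; rewrite cX_rep; have [// | nX] := boolP (b00 B i).
by move: (lt_neg_alpha (i := i)); rewrite /both0 (negbTE nX) => /(_ isT); lra.
Qed.

Lemma cY_rep_leif j : 0 <= cY (rep B d) j ?= iff b11 B j.
Proof.
apply/leifP; rewrite cY_rep; have [// | nY] := boolP (b11 B j).
by move: (beta_lt (j := j)); rewrite /both1 (negbTE nY) andbF => /(_ isT); lra.
Qed.

Lemma cZ_rep_leif j : cZ (rep B d) j <= d ?= iff b10 B j.
Proof.
apply/leifP; rewrite cZ_rep; have [// | nZ] := boolP (b10 B j).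
by move: (beta_lt (j := j)); rewrite /both1 (negbTE nZ) => /(_ isT).
Qed.

Lemma cW_rep_leif i : d <= cW (rep B d) i ?= iff b01 B i.
Proof.
apply/leifP; rewrite cW_rep; have [// | nW] := boolP (b01 B i).
by move: (lt_neg_alpha (i := i)); rewrite /both0 (negbTE nW) andbF => /(_ isT).
Qed.

Lemma rep_XY i j : cX (rep B d) i <= cY (rep B d) j ?= iff b00 B i && b11 B j.
Proof. exact: leif_trans (cX_rep_leif i) (cY_rep_leif j). Qed.

Lemma rep_ZW i j : cZ (rep B d) j <= cW (rep B d) i ?= iff b10 B j && b01 B i.
Proof. exact: leif_trans (cZ_rep_leif j) (cW_rep_leif i). Qed.

Lemma rep_XW i :
  cX (rep B d) i <= cW (rep B d) i + alpha i ?= iff ~~ both0 B i || (d == - alpha i).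
Proof.
case: adm => [[cov0 _] _ _ hb0 _]; apply/leifP.
move: (cov0 i) (hb0 i); rewrite cX_rep cW_rep /both0.
case: (b00 B i); case: (b01 B i) => //= _; last by rewrite addNr.
move=> /esym le; have [-> | ne] := eqVneq d (- alpha i); first by rewrite addNr.
have : - alpha i < d by rewrite lt_def ne le.
lra.
Qed.

Lemma rep_ZY j :
  cZ (rep B d) j <= cY (rep B d) j + beta j ?= iff ~~ both1 B j || (d == beta j).
Proof.
case: adm => [[_ cov1] _ _ _ hb1]; apply/leifP.
move: (cov1 j) (hb1 j); rewrite cZ_rep cY_rep /both1.
case: (b10 B j); case: (b11 B j) => //= _; rewrite ?add0r ?subrK //.
move=> /esym le; case: eqP => // /eqP ne.
by rewrite lt_neqAle ne le.
Qed.

Lemma rep_inH : inH gamma (rep B d).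
Proof.
apply: inH_intro => [i j | i j | i | j].
- exact: (rep_XY i j).1.
- exact: (rep_ZW i j).1.
- exact: (rep_XW i).1.
- exact: (rep_ZY j).1.
Qed.

Lemma rep_signature : signature (rep B d) = B.
Proof.
case: adm => _ [[i0 bX] [j0 bY] [i2 bW] [j2 bZ]] _ _ _.
apply/ffunP => -[[y [] ] []]; rewrite ffunE /=.
- transitivity [exists i, b00 B i && b11 B y]; last exact: existsb_andr bX.
  by apply: eq_existsb => i; rewrite (rep_XY i y).2.
- transitivity [exists i, b10 B y && b01 B i]; last exact: existsb_andl bW.
  by apply: eq_existsb => i; rewrite eq_sym (rep_ZW i y).2.
- transitivity [exists j, b10 B j && b01 B y]; last exact: existsb_andr bZ.
  by apply: eq_existsb => j; rewrite eq_sym (rep_ZW y j).2.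
- transitivity [exists j, b00 B y && b11 B j]; last exact: existsb_andl bY.
  by apply: eq_existsb => j; rewrite (rep_XY y j).2.
Qed.

(* A point of H that is tight wherever rep B d is satisfies the equalities
   prescribed by B, hence is M-equivalent to rep B d. *)
Lemma rep_vertex : is_vertex gamma (rep B d).
Proof.
split; first exact: rep_inH.
move=> lam v1 v2 lam0 lam1 H1 H2 E.
have [cov ne thr hb0 hb1] := adm.
suff tight_Mequiv w : inH gamma w ->
    (forall i j d0 d1, tight (rep B d) i j d0 d1 -> tight w i j d0 d1) ->
    Mequiv w (rep B d).
  by split; apply: tight_Mequiv => // i j d0 d1 /(tight_segment H1 H2 lam0 lam1 E) [].
move=> wH tw; apply: Mequiv_rep => //.
- by move=> i j bX bY; apply/tight01E/tw/tight01E/eqP; rewrite (rep_XY i j).2 bX bY.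
- move=> i j bW bZ; apply/tight10E/tw/tight10E/eqP.
  by rewrite eq_sym (rep_ZW i j).2 bW bZ.
- by move=> i nb; apply/tight00E/tw/tight00E/eqP; rewrite (rep_XW i).2 nb.
- by move=> j nb; apply/tight11E/tw/tight11E/eqP; rewrite (rep_ZY j).2 nb.
- case: thr => -[k dk]; [left | right]; exists k; split => //.
  + by rewrite hb0 dk.
  + by apply/tight00E/tw/tight00E/eqP; rewrite (rep_XW k).2 dk eqxx orbT.
  + by rewrite hb1 dk.
  + by apply/tight11E/tw/tight11E/eqP; rewrite (rep_ZY k).2 dk eqxx orbT.
Qed.

End Representative.

Lemma admissible_of_rep B d : covering B -> nonempty B -> threshold d ->
  inH gamma (rep B d) -> signature (rep B d) = B -> admissible B d.
Proof.
move=> cov ne thr repH sigB.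
have [[i0 bX0] [j0 bY0] [i2 bW2] [j2 bZ2]] := ne.
split=> // [i | j].
- have [/andP[bX bW] | nb] := boolP (both0 B i).
    by apply/esym; move: (inH_XW repH i); rewrite cX_rep cW_rep bX bW; lra.
  apply/esym/negbTE; rewrite -ltNge; case/nandP: nb => [nX | nW].
  + move: (sig_lt_XY repH (i := i) (j := j0)).
    by rewrite sigB nX cX_rep cY_rep (negbTE nX) bY0 => /(_ isT); lra.
  + move: (sig_lt_ZW repH (i := i) (j := j2)).
    by rewrite sigB nW cW_rep cZ_rep (negbTE nW) bZ2 => /(_ isT).
- have [/andP[bZ bY] | nb] := boolP (both1 B j).
    by apply/esym; move: (inH_ZY repH j); rewrite cZ_rep cY_rep bZ bY; lra.
  apply/esym/negbTE; rewrite -ltNge; case/nandP: nb => [nZ | nY].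
  + move: (sig_lt_ZW repH (i := i2) (j := j)).
    by rewrite sigB nZ orbT cW_rep cZ_rep (negbTE nZ) bW2 => /(_ isT).
  + move: (sig_lt_XY repH (i := i0) (j := j)).
    by rewrite sigB nY orbT cX_rep cY_rep (negbTE nY) bX0 => /(_ isT); lra.
Qed.

Lemma vertex_admissible v : is_vertex gamma v ->
  exists2 d, admissible (signature v) d & Mequiv v (rep (signature v) d).
Proof.
move=> vV; set B := signature v.
have cov : covering B by split; [exact: vertex_cover0 | exact: vertex_cover1].
have ne : nonempty B by exact: vertex_nonempty.
have [d thr E] : exists2 d, threshold d & Mequiv v (rep B d).
  have rep_tight := Mequiv_rep cov ne (sig_XY vV.1) (sig_WZ vV.1)
    (@vertex_diag0 v vV) (@vertex_diag1 v vV).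
  case: (vertex_pinned vV) => -[k [bk tk]].
  - by exists (- alpha k); [left; exists k | apply: rep_tight; left; exists k].
  - by exists (beta k); [right; exists k | apply: rep_tight; right; exists k].
exists d => //; apply: admissible_of_rep => //.
- exact: inH_Mequiv E vV.1.
- by rewrite -(signature_Mequiv E).
Qed.

Lemma admissible_le B d d' : admissible B d -> admissible B d' -> d <= d'.
Proof.
move=> [_ _ thr hb0 hb1] [_ _ thr' hb0' hb1'].
case: thr => -[k dk]; first by rewrite dk -hb0' hb0 dk.
case: thr' => -[k' dk']; first by rewrite dk dk' beta_le_neg_alpha.
by rewrite dk' -hb1 hb1' dk'.
Qed.

Lemma admissible_unique B d d' : admissible B d -> admissible B d' -> d = d'.
Proof.
move=> adm adm'; apply/le_anti.
by rewrite (admissible_le adm adm') (admissible_le adm' adm).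
Qed.

(** * Admissible signatures form S *)

Lemma inS1_admissible B : inS1 B -> exists d, admissible B d.
Proof.
case/existsP => t /and4P[tm /forallP h0 /forallP h1].
move=> /existsP[i1 /existsP[j1 /andP[bZ1 bY1]]].
have {}h0 i : (b00 B i || b01 B i) && (both0 B i == (t <= i)%N).
  by move: (h0 i); rewrite ltnNge implyb_split.
have {}h1 j : (b10 B j || b11 B j) && ~~ both1 B j by move: (h1 j); rewrite neqb_split.
have /andP[bXt bWt] : both0 B t by case/andP: (h0 t) => _ /eqP ->.
exists (- alpha t); split.
- by split=> [i | j]; [case/andP: (h0 i) | case/andP: (h1 j)].
- by split; [exists t | exists j1 | exists t | exists i1].
- by left; exists t.
- by move=> i; case/andP: (h0 i) => _ /eqP ->; rewrite le_neg_alpha.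
- move=> j; case/andP: (h1 j) => _ /negbTE ->; rewrite neg_alpha_le_beta.
  by case: eqP => // tmax; move: tm; rewrite tmax /= ltnn.
Qed.

Lemma inS2_admissible B : inS2 B -> admissible B (beta ord0).
Proof.
move=> /forallP h.
have {}h i : [/\ (b00 B i || b01 B i), both0 B i = (i == ord_max),
                (b10 B i || b11 B i) & both1 B i = (i == ord0)].
  move: (h i); rewrite ltn_neqAle ltn_ord andbT lt0n andbA !implyb_split eqSS.
  by case/andP=> /andP[c0 /eqP e0] /andP[c1 /eqP e1].
have /andP[bXm bWm] : both0 B ord_max by case: (h ord_max) => _ -> _ _.
have /andP[bZ0 bY0] : both1 B ord0 by case: (h ord0) => _ _ _ ->.
split.
- by split=> [i | j]; [case: (h i) | case: (h j)].
- by split; [exists ord_max | exists ord0 | exists ord_max | exists ord0].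
- by right; exists ord0.
- by move=> i; case: (h i) => _ -> _ _; rewrite neg_alpha_le_beta eqxx andbT.
- by move=> j; case: (h j) => _ _ _ ->; rewrite le_beta leqn0.
Qed.

Lemma inS3_admissible B : inS3 B -> exists d, admissible B d.
Proof.
case/existsP => t /and4P[t0 /forallP h1 /forallP h0].
move=> /existsP[i1 /existsP[j1 /andP[bX1 bW1]]].
have {}h1 j : (b10 B j || b11 B j) && (both1 B j == (j <= t)%N).
  by move: (h1 j); rewrite ltnNge implyb_split.
have {}h0 i : (b00 B i || b01 B i) && ~~ both0 B i by move: (h0 i); rewrite neqb_split.
have /andP[bZt bYt] : both1 B t by case/andP: (h1 t) => _ /eqP ->.
exists (beta t); split.
- by split=> [i | j]; [case/andP: (h0 i) | case/andP: (h1 j)].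
- by split; [exists i1 | exists t | exists j1 | exists t].
- by right; exists t.
- move=> i; case/andP: (h0 i) => _ /negbTE ->; rewrite neg_alpha_le_beta.
  by case: (eqVneq t ord0) t0 => [-> | _]; rewrite ?andbF.
- by move=> j; case/andP: (h1 j) => _ /eqP ->; rewrite le_beta.
Qed.

Lemma S_admissible B : B \in S N -> exists d, admissible B d.
Proof.
rewrite inE => /or3P[/inS1_admissible | /inS2_admissible | /inS3_admissible] //.
by exists (beta ord0).
Qed.

Lemma admissible_alpha_S B k : k != ord_max -> admissible B (- alpha k) -> B \in S N.
Proof.
move=> km [[cov0 cov1] [_ [j1 bY1] _ [i1 bZ1]] _ hb0 hb1].
rewrite inE; apply/or3P/Or31/existsP; exists k; apply/and4P; split.
- by rewrite ltnS ltn_neqAle km -ltnS ltn_ord.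
- apply/forallP => i.
  by rewrite ltnNge implyb_split cov0 -/(both0 B i) hb0 le_neg_alpha eqxx.
- apply/forallP => j.
  by rewrite neqb_split cov1 -/(both1 B j) hb1 neg_alpha_le_beta (negbTE km).
- by apply/existsP; exists i1; apply/existsP; exists j1; apply/andP.
Qed.

Lemma admissible_beta_S B k : admissible B (beta k) -> B \in S N.
Proof.
move=> [[cov0 cov1] [[i1 bX1] _ [j1 bW1] _] _ hb0 hb1].
rewrite inE; case: (eqVneq k ord0) hb0 hb1 => [-> | k0] hb0 hb1.
- apply/or3P/Or32/forallP => i.
  rewrite ltn_neqAle ltn_ord andbT lt0n andbA !implyb_split cov0 cov1 eqSS.
  rewrite -/(both0 B i) -/(both1 B i) hb0 hb1 neg_alpha_le_beta le_beta leqn0.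
  by rewrite eqxx andbT -val_eqE /= !eqxx.
- apply/or3P/Or33/existsP; exists k; apply/and4P; split.
  + by rewrite lt0n.
  + apply/forallP => j.
    by rewrite ltnNge implyb_split cov1 -/(both1 B j) hb1 le_beta eqxx.
  + apply/forallP => i.
    by rewrite neqb_split cov0 -/(both0 B i) hb0 neg_alpha_le_beta (negbTE k0) andbF.
  + by apply/existsP; exists i1; apply/existsP; exists j1; apply/andP.
Qed.

Lemma admissible_S B d : admissible B d -> B \in S N.
Proof.
move=> adm; case: (adm) => _ _ [] [k dk] _ _; rewrite {}dk in adm.
  case: (eqVneq k ord_max) adm => [-> | km] adm; last exact: admissible_alpha_S km adm.
  by rewrite -beta0E in adm; exact: admissible_beta_S adm.
exact: admissible_beta_S adm.
Qed.

Lemma S_vertex B : B \in S N -> exists v, is_vertex gamma v /\ signature v = B.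
Proof.
case/S_admissible => d adm.
by exists (rep B d); split; [exact: rep_vertex | exact: rep_signature].
Qed.

Lemma vertex_signature_S v : is_vertex gamma v -> signature v \in S N.
Proof. by case/vertex_admissible => d adm _; exact: admissible_S adm. Qed.

Lemma signature_vertex_Mequiv v w : is_vertex gamma v -> is_vertex gamma w ->
  signature v = signature w -> Mequiv v w.
Proof.
move=> /vertex_admissible[d adm E] /vertex_admissible[d' adm' E'] eB.
rewrite eB in adm E; rewrite (admissible_unique adm adm') in E.
by move=> i j d0 d1; rewrite E E'.
Qed.

Theorem num_vertex_classes_S : num_vertex_classes_is gamma #|S N|.
Proof.
split.
- have [vS vSP] : exists vS : sig_t N -> vec R N,
      forall B, B \in S N -> is_vertex gamma (vS B) /\ signature (vS B) = B.
    apply: (fin_all_exists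
      (P := fun B v => B \in S N -> is_vertex gamma v /\ signature v = B)) => B.
    have [/S_vertex [v vB] | nS] := boolP (B \in S N); first by exists v.
    by exists (fun _ _ _ => 0) => /negP.
  exists (fun c => vS (enum_val c)); split => [c | c c' neq_c E].
    by case: (vSP _ (enum_valP c)).
  apply/neq_c/enum_val_inj.
  by rewrite -(vSP _ (enum_valP c)).2 -(vSP _ (enum_valP c')).2 (signature_Mequiv E).
- move=> n' ws wV wD.
  have sig_inj : injective (fun c => signature (ws c)).
    move=> c c' eB; have [// | /eqP neq_c] := eqVneq c c'.
    by case: (wD c c' neq_c); exact: signature_vertex_Mequiv.
  rewrite -[n']card_ord -(card_imset _ sig_inj).
  by apply/subset_leq_card/subsetP => _ /imsetP[c _ ->]; exact: vertex_signature_S.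
Qed.

End VertexClasses.

Theorem corollary1 (R : realType) (n : nat) (gamma : 'I_n -> R) :
  (0 < n)%N ->
  (forall i j : 'I_n, (i < j)%N -> gamma i < gamma j) ->
  num_vertex_classes_is gamma (5 * 4 ^ (n - 1) + 4 - 2 ^ (n + 2))%N /\
  #|S n| = (5 * 4 ^ (n - 1) + 4 - 2 ^ (n + 2))%N.
Proof.
case: n gamma => [// | m] gamma _ gamma_incr.
by rewrite -card_S; split=> //; exact: num_vertex_classes_S.
Qed.
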